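(* Let $W\in\mathbb{R}^{n\times n}$ be symmetric with nonnegative entries, $L=\operatorname{diag}(W\mathbf{1})-W$, and let $L=V^T\Lambda V$ be a full spectral decomposition with $V$ orthogonal, $\Lambda=\operatorname{diag}(\lambda_1,\dots,\lambda_n)$, $\lambda_1\le\dots\le\lambda_n$. Define $\tilde A=(\lambda_nI-\Lambda)^{1/2}V$. Let $K\ge1$. Then the ratio-cut problem $$\min_X\operatorname{tr}\{XLX^T\}\ \text{s.t. }X\in\mathcal{H}$$ and the K-means problem $$\min_{D,X}\|\tilde A-DX\|_F^2\ \text{s.t. }X\in\mathcal{H}$$ have the same solutions $X$.
   Context: $\mathbf{1}$ is the all-ones vector, $\operatorname{diag}(v)$ the diagonal matrix with diagonal $v$. $\mathcal{F}$ is the set of matrices $F\in\{0,1\}^{K\times n}$ in which every column has exactly one entry $1$ (rows are cluster indicator vectors, each cluster assumed nonempty), and $\mathcal{H}=\{(FF^T)^{-1/2}F:F\in\mathcal{F}\}$ is the set of normalized indicator matrices. *)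

From HB Require Import structures.
From mathcomp Require Import all_boot all_order all_algebra.
Set Implicit Arguments. Unset Strict Implicit. Unset Printing Implicit Defensive.
Import Order.TTheory GRing.Theory Num.Theory.
Local Open Scope ring_scope.

Section Defs.
Variable R : rcfType.

Definition orthogonal_mx (n : nat) (V : 'M[R]_n) : Prop :=
  V^T *m V = 1%:M /\ V *m V^T = 1%:M.

Definition laplacian (n : nat) (W : 'M[R]_n) : 'M[R]_n :=
  diag_mx (\row_i (\sum_j W i j)) - W.

Definition indicator_mx (K n : nat) (F : 'M[R]_(K, n)) : Prop :=
  (forall k j, F k j = 0 \/ F k j = 1) /\
  (forall j, exists! k, F k j = 1) /\
  (forall k, exists j, F k j = 1).

(* M^{-1/2} for a diagonal matrix M with positive diagonal
   (F F^T is such a matrix for F in \mathcal{F}) *)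
Definition diag_invsqrt (K : nat) (M : 'M[R]_K) : 'M[R]_K :=
  diag_mx (\row_k (Num.sqrt (M k k))^-1).

Definition normalized_indicator (K n : nat) (X : 'M[R]_(K, n)) : Prop :=
  exists F : 'M[R]_(K, n), indicator_mx F /\ X = diag_invsqrt (F *m F^T) *m F.

Definition frob2 (m n : nat) (M : 'M[R]_(m, n)) : R :=
  \sum_i \sum_j (M i j) ^+ 2.

End Defs.

(* Every X in H has orthonormal rows, so for fixed X the best D is At X^T,
   and expanding the square gives
   ||At - D X||^2 = ||At||^2 - tr(X At^T At X^T) + ||D - At X^T||^2.
   Since At^T At = lambda_n I - L and tr(X X^T) = K, the K-means objective is
   a constant plus tr(X L X^T) plus a nonnegative term that vanishes at the
   optimal D, so both problems have the same minimisers X. *)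

From HB Require Import structures.
From mathcomp Require Import all_boot all_order all_algebra.
From mathcomp Require Import lra.
Import Order.TTheory GRing.Theory Num.Theory.
Local Open Scope ring_scope.

Set Implicit Arguments.
Unset Strict Implicit.

Section NormalizedIndicator.
Variable R : rcfType.

Lemma frob2_tr m n (M : 'M[R]_(m, n)) : frob2 M = \tr (M *m M^T).
Proof.
rewrite /frob2 /mxtrace; apply: eq_bigr => i _; rewrite mxE.
by apply: eq_bigr => j _; rewrite !mxE expr2.
Qed.

Lemma frob2_ge0 m n (M : 'M[R]_(m, n)) : 0 <= frob2 M.
Proof. by apply: sumr_ge0 => i _; apply: sumr_ge0 => j _; apply: sqr_ge0. Qed.

Lemma frob2_0 m n : frob2 (0 : 'M[R]_(m, n)) = 0.
Proof. by rewrite frob2_tr mul0mx mxtrace0. Qed.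

Lemma indicator_mx_gram_offdiag K n (F : 'M[R]_(K, n)) k l :
  indicator_mx F -> k != l -> (F *m F^T) k l = 0.
Proof.
case=> F01 [Funiq _] kl; rewrite mxE; apply: big1 => j _; rewrite mxE.
case: (F01 k j) => [->|Fkj]; first by rewrite mul0r.
case: (F01 l j) => [->|Flj]; first by rewrite mulr0.
case: (Funiq j) => k0 [_ Fk0].
by move: kl; rewrite -(Fk0 _ Fkj) -(Fk0 _ Flj) eqxx.
Qed.

Lemma indicator_mx_gram_gt0 K n (F : 'M[R]_(K, n)) k :
  indicator_mx F -> 0 < (F *m F^T) k k.
Proof.
case=> _ [_ Fne]; case: (Fne k) => j0 Fkj0.
rewrite mxE (bigD1 j0) //= !mxE Fkj0 mulr1 ltr_wpDr ?ltr01 //.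
by apply: sumr_ge0 => j _; rewrite mxE -expr2 sqr_ge0.
Qed.

Lemma diag_invsqrt_normalize K (M : 'M[R]_K) :
  (forall k l, k != l -> M k l = 0) -> (forall k, 0 < M k k) ->
  diag_invsqrt M *m M *m (diag_invsqrt M)^T = 1%:M.
Proof.
move=> Moff Mpos; rewrite /diag_invsqrt tr_diag_mx.
apply/matrixP => k l; rewrite mul_mx_diag mul_diag_mx !mxE.
have [<-|kl] := eqVneq k l; last by rewrite (Moff _ _ kl) mulr0 mul0r.
have sqrt_gt0 : 0 < Num.sqrt (M k k) by rewrite sqrtr_gt0.
rewrite -[X in _ * X * _](sqr_sqrtr (ltW (Mpos k))) expr2.
by rewrite mulKf ?divff ?gt_eqF.
Qed.

Lemma normalized_indicator_mulmx_tr K n (X : 'M[R]_(K, n)) :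
  normalized_indicator X -> X *m X^T = 1%:M.
Proof.
case=> F [FI ->]; rewrite trmx_mul mulmxA -(mulmxA _ F).
apply: diag_invsqrt_normalize => [k l|k].
- exact: indicator_mx_gram_offdiag.
- exact: indicator_mx_gram_gt0.
Qed.

End NormalizedIndicator.

Section KMeansObjective.
Variable R : rcfType.

Lemma frob2_subr_mul m N K (A : 'M[R]_(m, N)) (D : 'M[R]_(m, K)) (X : 'M[R]_(K, N)) :
  X *m X^T = 1%:M ->
  frob2 (A - D *m X) =
  frob2 A - \tr (X *m (A^T *m A) *m X^T) + frob2 (D - A *m X^T).
Proof.
move=> XXt.
have trmxB p q (M1 M2 : 'M[R]_(p, q)) : (M1 - M2)^T = M1^T - M2^T by exact: raddfB.
have mxtraceB p (M1 M2 : 'M[R]_p) : \tr (M1 - M2) = \tr M1 - \tr M2 by exact: raddfB.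
rewrite !frob2_tr !trmxB !trmx_mul !trmxK !mulmxBl !mulmxBr !mxtraceB.
have trDXXD : \tr (D *m X *m (X^T *m D^T)) = \tr (D *m D^T).
  by rewrite -mulmxA (mulmxA X) XXt mul1mx.
have trAXXA : \tr (A *m X^T *m (X *m A^T)) = \tr (X *m (A^T *m A) *m X^T).
  by rewrite mxtrace_mulC !mulmxA.
rewrite trDXXD trAXXA !mulmxA.
set a := \tr (A *m A^T); set b := \tr (X *m A^T *m A *m X^T).
set c := \tr (D *m D^T); set d := \tr (D *m X *m A^T).
set e := \tr (A *m X^T *m D^T); lra.
Qed.

Lemma mxtrace_scalar_subr K n (X : 'M[R]_(K, n)) (c : R) (L : 'M[R]_n) :
  X *m X^T = 1%:M ->
  \tr (X *m (c%:M - L) *m X^T) = c * K%:R - \tr (X *m L *m X^T).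
Proof.
move=> XXt; rewrite mulmxBr mulmxBl linearB /= mul_mx_scalar -scalemxAl.
by rewrite mxtraceZ XXt mxtrace1.
Qed.

Lemma spectral_shift_gram n (V : 'M[R]_n.+1) (lam : 'rV[R]_n.+1) :
  V^T *m V = 1%:M ->
  (forall i j : 'I_n.+1, (i <= j)%N -> lam 0 i <= lam 0 j) ->
  let A := diag_mx (\row_i Num.sqrt (lam 0 ord_max - lam 0 i)) *m V in
  A^T *m A = (lam 0 ord_max)%:M - V^T *m diag_mx lam *m V.
Proof.
move=> VtV lam_sorted A; rewrite /A trmx_mul tr_diag_mx mulmxA.
set d := diag_mx _; rewrite -(mulmxA V^T d d).
have -> : d *m d = (lam 0 ord_max)%:M - diag_mx lam.
  apply/matrixP => i j; rewrite /d mul_diag_mx !mxE.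
  have [->|ij] := eqVneq i j; last by rewrite !mulr0n mulr0 subr0.
  by rewrite !mulr1n -expr2 sqr_sqrtr // subr_ge0 lam_sorted // -ltnS.
by rewrite mulmxBr mulmxBl mul_mx_scalar -scalemxAl VtV scalemx1.
Qed.

Lemma kmeans_objectiveE m N K (A : 'M[R]_(m, N)) (L : 'M[R]_N) (c : R)
    (D : 'M[R]_(m, K)) (X : 'M[R]_(K, N)) :
  A^T *m A = c%:M - L -> X *m X^T = 1%:M ->
  frob2 (A - D *m X) =
  (frob2 A - c * K%:R) + \tr (X *m L *m X^T) + frob2 (D - A *m X^T).
Proof.
move=> AtA XXt; rewrite frob2_subr_mul // AtA mxtrace_scalar_subr //; lra.
Qed.

End KMeansObjective.

Theorem proposition4 (R : rcfType) (n K : nat)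
  (W : 'M[R]_n.+1) (V : 'M[R]_n.+1) (lam : 'rV[R]_n.+1) :
  W^T = W ->
  (forall i j, 0 <= W i j) ->
  orthogonal_mx V ->
  (forall i j : 'I_n.+1, (i <= j)%N -> lam 0 i <= lam 0 j) ->
  laplacian W = V^T *m diag_mx lam *m V ->
  (1 <= K)%N ->
  let L := laplacian W in
  let At := diag_mx (\row_i Num.sqrt (lam 0 ord_max - lam 0 i)) *m V in
  forall X : 'M[R]_(K, n.+1),
    (normalized_indicator X /\
     forall Y : 'M[R]_(K, n.+1), normalized_indicator Y ->
       \tr (X *m L *m X^T) <= \tr (Y *m L *m Y^T))
    <->
    (exists D : 'M[R]_(n.+1, K),
       normalized_indicator X /\
       forall (D' : 'M[R]_(n.+1, K)) (Y : 'M[R]_(K, n.+1)),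
         normalized_indicator Y ->
         frob2 (At - D *m X) <= frob2 (At - D' *m Y)).
Proof.
move=> _ _ [VtV _] lam_sorted L_spectral _ L At X.
have AtA : At^T *m At = (lam 0 ord_max)%:M - L.
  by rewrite /L L_spectral; exact: spectral_shift_gram.
have objE D Y := kmeans_objectiveE D AtA (normalized_indicator_mulmx_tr Y).
split.
- case=> HX X_opt; exists (At *m X^T); split=> // D' Y HY.
  rewrite !objE // subrr frob2_0.
  have := X_opt Y HY; have := frob2_ge0 (D' - At *m Y^T); lra.
- case=> D [HX DX_opt]; split=> // Y HY.
  have := DX_opt (At *m Y^T) Y HY; rewrite !objE // subrr frob2_0.
  have := frob2_ge0 (D - At *m X^T); lra.
Qed.
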